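(* Let $\alpha_1\in(0,1)$ be irrational and define $\alpha_{n+1}=1-\left\lfloor \frac{1}{\alpha_n}\right\rfloor\alpha_n$ for $n=1,2,\ldots$, where $\lfloor\cdot\rfloor$ is the floor function. Then $\lim_{n\to\infty}\alpha_n=0$. *)

From HB Require Import structures.
From mathcomp Require Import all_boot all_order all_algebra.
From mathcomp Require Import all_classical all_reals all_analysis.
Set Implicit Arguments. Unset Strict Implicit. Unset Printing Implicit Defensive.
Import Order.TTheory GRing.Theory Num.Theory.
Local Open Scope ring_scope.

(* alpha_seq a1 n = alpha_{n+1} (0-indexed): alpha_seq a1 0 = a1,
   alpha_{n+1} = 1 - floor(1/alpha_n) * alpha_n *)
Fixpoint alpha_seq {R : realType} (a1 : R) (n : nat) : R :=
  match n with
  | 0%N => a1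
  | k.+1 => let a := alpha_seq a1 k in 1 - (Num.floor (a^-1))%:~R * a
  end.

(* With k = floor(1/a), irrationality of a makes k < 1/a < k + 1 strict, so
   the next term 1 - k a lies in (0, 1/(k+1)] and is again irrational.  Hence
   floor(1/alpha_n) increases by at least one at every step, which gives
   0 < alpha_n <= 1/(n+1). *)
From HB Require Import structures.
From mathcomp Require Import all_boot all_order all_algebra.
From mathcomp Require Import all_classical all_reals all_analysis.
From mathcomp Require Import lra.

Set Implicit Arguments.
Unset Strict Implicit.
Unset Printing Implicit Defensive.
Import numFieldNormedType.Exports.
Import Order.TTheory GRing.Theory Num.Theory.
Local Open Scope ring_scope.
Local Open Scope classical_set_scope.

Section Irrational.
Variable R : realType.
Implicit Types x : R.

Lemma rational_int (k : int) : rational (k%:~R : R).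
Proof. by exists k%:~R => //; rewrite ratr_int. Qed.

Lemma irrationalV x : irrational x -> irrational x^-1.
Proof.
by move=> irr_x [q _ qE]; apply: irr_x; exists q^-1 => //; rewrite fmorphV /= qE invrK.
Qed.

Lemma irrational_affine (p q : rat) x : q != 0 -> irrational x ->
  irrational (ratr p + ratr q * x).
Proof.
move=> q_neq0 irr_x [r _ rE]; apply: irr_x; exists ((r - p) / q) => //.
by rewrite fmorph_div rmorphB /= rE addrAC subrr add0r mulrAC divff ?mul1r ?fmorph_eq0.
Qed.

Lemma floor_lt_irrational x : irrational x -> (Num.floor x)%:~R < x.
Proof.
move=> irr_x; rewrite lt_neqAle floor_le andbT.
by apply/eqP => xE; apply: irr_x; rewrite -xE; exact: rational_int.
Qed.

Lemma floor_inv_ge1 x : 0 < x <= 1 -> (1 <= Num.floor x^-1)%R.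
Proof. by move=> /andP[x_gt0 x_le1]; rewrite floor_ge_int invf_ge1. Qed.

End Irrational.

Section AlphaStep.
Variable R : realType.

Definition alpha_step (a : R) : R := 1 - (Num.floor a^-1)%:~R * a.

Lemma alpha_seqS (a1 : R) n : alpha_seq a1 n.+1 = alpha_step (alpha_seq a1 n).
Proof. by []. Qed.

Variable a : R.
Hypotheses (a_gt0 : 0 < a) (irr_a : irrational a).

Lemma floor_inv_lt : (Num.floor a^-1)%:~R < a^-1.
Proof. exact/floor_lt_irrational/irrationalV. Qed.

Lemma alpha_step_gt0 : 0 < alpha_step a.
Proof.
rewrite /alpha_step subr_gt0 -[X in _ < X](mulVf (lt0r_neq0 a_gt0)) ltr_pM2r //.
exact: floor_inv_lt.
Qed.

Lemma floor_inv_alpha_step : (Num.floor a^-1 + 1 <= Num.floor (alpha_step a)^-1)%R.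
Proof.
set k := Num.floor a^-1; set s := alpha_step a.
have k_ge0 : (0 : R) <= k%:~R by rewrite ler0z floor_ge0 invr_ge0 ltW.
have ka_gt1 : 1 < (k + 1)%:~R * a.
  by rewrite -[X in X < _](mulVf (lt0r_neq0 a_gt0)) ltr_pM2r // floorD1_gt.
(* (k + 1) s = 1 - k ((k + 1) a - 1) *)
have ks_le1 : (k + 1)%:~R * s <= 1.
  by rewrite intrD in ka_gt1 *; rewrite /s /alpha_step -/k; nra.
by rewrite floor_ge_int -(ler_pM2r alpha_step_gt0) mulVf ?lt0r_neq0 ?alpha_step_gt0.
Qed.

Hypothesis a_lt1 : a < 1.

Lemma alpha_step_lt1 : alpha_step a < 1.
Proof.
have k_ge1 : (1 : R) <= (Num.floor a^-1)%:~R.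
  by rewrite ler1z floor_inv_ge1 // a_gt0 ltW.
by rewrite /alpha_step gtrBl mulr_gt0 // (lt_le_trans ltr01 k_ge1).
Qed.

Lemma irrational_alpha_step : irrational (alpha_step a).
Proof.
have k_ge1 : (1 <= Num.floor a^-1)%R by rewrite floor_inv_ge1 // a_gt0 ltW.
have k_neq0 : - (Num.floor a^-1)%:~R != 0 :> rat.
  by rewrite oppr_eq0 intr_eq0 gt_eqF // (lt_le_trans ltr01 k_ge1).
have := @irrational_affine R 1 _ a k_neq0 irr_a.
by rewrite rmorph1 rmorphN /= ratr_int mulNr.
Qed.

End AlphaStep.

Section AlphaSeq.
Variables (R : realType) (a1 : R).
Hypotheses (a1_in01 : 0 < a1 < 1) (irr_a1 : irrational a1).

Lemma alpha_seq_in01_irrational n :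
  [/\ 0 < alpha_seq a1 n, alpha_seq a1 n < 1 & irrational (alpha_seq a1 n)].
Proof.
elim: n => [|n [a_gt0 a_lt1 irr_a]]; first by case/andP: a1_in01.
rewrite alpha_seqS; split.
- exact: alpha_step_gt0.
- exact: alpha_step_lt1.
- exact: irrational_alpha_step.
Qed.

Lemma floor_inv_alpha_seq_ge n : (n.+1%:Z <= Num.floor (alpha_seq a1 n)^-1)%R.
Proof.
elim: n => [|n IHn].
  by case/andP: a1_in01 => a1_gt0 a1_lt1; rewrite floor_inv_ge1 // a1_gt0 ltW.
have [a_gt0 _ irr_a] := alpha_seq_in01_irrational n.
rewrite alpha_seqS (le_trans _ (floor_inv_alpha_step a_gt0 irr_a)) //.
by rewrite -addn1 PoszD lerD2r.
Qed.

Lemma alpha_seq_le_harmonic n : alpha_seq a1 n <= harmonic n.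
Proof.
have [a_gt0 _ _] := alpha_seq_in01_irrational n.
have := floor_inv_alpha_seq_ge n; rewrite floor_ge_int /= => n_le_inv.
by rewrite -[alpha_seq a1 n]invrK lef_pV2 ?posrE ?invr_gt0 ?ltr0n.
Qed.

End AlphaSeq.

Theorem lemma2p3 (R : realType) (a1 : R) :
  0 < a1 < 1 -> irrational a1 ->
  (fun n => alpha_seq a1 n) @ \oo --> (0 : R^o).
Proof.
move=> a1_in01 irr_a1.
apply: (@squeeze_cvgr _ _ _ _ (fun=> 0) harmonic); last 2 first.
- exact: cvg_cst.
- exact: cvg_harmonic.
apply: nearW => n; have [a_gt0 _ _] := alpha_seq_in01_irrational a1_in01 irr_a1 n.
by rewrite ltW // alpha_seq_le_harmonic.
Qed.
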